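(* Fix a master index $m\in\{1,\dots,N\}$, write $\omega=\omega_m$, $\phi=\phi_m$, $\alpha=m$, $\beta=m+N$, and assume $4\omega^2\neq\omega_r^2$ for all $r\in\{1,\dots,N\}$. Define $$\Psi^{(P)}=\big[4\omega^2\mathbf{M}-\mathbf{K}\big]^{-1}\mathbf{G}(\phi,\phi),\qquad \Psi^{(N)}=-\mathbf{K}^{-1}\mathbf{G}(\phi,\phi),$$ $\Psi^{(2)}_{\alpha\alpha}=\Psi^{(2)}_{\beta\beta}=\Psi^{(P)}$, $\Psi^{(2)}_{\alpha\beta}=\Psi^{(2)}_{\beta\alpha}=\Psi^{(N)}$, and for $k,l,p\in\{\alpha,\beta\}$ $$\Xi_{klp}=\mathbf{G}(\Psi^{(2)}_{kl},\phi)+\mathbf{G}(\phi,\Psi^{(2)}_{lp})+\mathbf{H}(\phi,\phi,\phi),\qquad f_{\alpha klp}=-\frac{\phi^{T}\Xi_{klp}}{2i\omega},\qquad f_{\beta klp}=-f_{\alpha klp}.$$ Let $z_\alpha(t),z_\beta(t)$ be differentiable (complex-valued) functions satisfying the reduced dynamics $$\dot z_\alpha=i\omega z_\alpha+\sum_{k,l,p\in\{\alpha,\beta\}}f_{\alpha klp}z_kz_lz_p,\qquad \dot z_\beta=-i\omega z_\beta+\sum_{k,l,p\in\{\alpha,\beta\}}f_{\beta klp}z_kz_lz_p,$$ and set $r=z_\alpha+z_\beta$, $s=i\omega(z_\alpha-z_\beta)$. Then $\dot r=s$ and $$\dot s=-\omega^2r-(h+A)\,r^3-B\,r\,s^2,$$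 so that $\ddot r+\omega^2 r+(h+A)r^3+B\,r\,\dot r^2=0$, where $$h=\phi^{T}\mathbf{H}(\phi,\phi,\phi),\quad A=2\,\phi^{T}\mathbf{G}(\hat{\mathbf a},\phi),\quad B=2\,\phi^{T}\mathbf{G}(\hat{\mathbf b},\phi),\quad \hat{\mathbf a}=\tfrac12\big(\Psi^{(N)}+\Psi^{(P)}\big),\quad \hat{\mathbf b}=\frac{1}{2\omega^2}\big(\Psi^{(N)}-\Psi^{(P)}\big).$$
   Context: Let $N\ge1$, let $\mathbf{M},\mathbf{K}\in\mathbb{R}^{N\times N}$ be symmetric positive definite, let $\mathbf{G}:\mathbb{R}^N\times\mathbb{R}^N\to\mathbb{R}^N$ be a symmetric bilinear map and $\mathbf{H}:(\mathbb{R}^N)^3\to\mathbb{R}^N$ a symmetric trilinear map, both extended complex-multilinearly to $\mathbb{C}^N$. Let $\phi_1,\dots,\phi_N\in\mathbb{R}^N$ and $\omega_1,\dots,\omega_N>0$ satisfy $\mathbf{K}\phi_s=\omega_s^2\mathbf{M}\phi_s$ and $\phi_s^{T}\mathbf{M}\phi_t=\delta_{st}$ (mass-normalised linear vibration modes). *)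

From Stdlib Require Import Reals.
From Coquelicot Require Import Coquelicot.
From mathcomp Require Import all_boot all_algebra.
From mathcomp Require Import Rstruct.
Set Implicit Arguments. Unset Strict Implicit. Unset Printing Implicit Defensive.
Import GRing.Theory Num.Theory.
Local Open Scope ring_scope.

Definition vdot (N : nat) (x y : 'cV[R]_N) : R := (x^T *m y) 0 0.

Definition spd (N : nat) (A : 'M[R]_N) : Prop :=
  A^T = A /\ forall x : 'cV[R]_N, x != 0 -> 0 < vdot x (A *m x).

Definition sym_bilinear (N : nat) (G : 'cV[R]_N -> 'cV[R]_N -> 'cV[R]_N) : Prop :=
  (forall x y, G x y = G y x) /\
  (forall (a : R) x y z, G (a *: x + y) z = a *: G x z + G y z).

Definition sym_trilinear (N : nat)
    (H : 'cV[R]_N -> 'cV[R]_N -> 'cV[R]_N -> 'cV[R]_N) : Prop :=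
  (forall x y z, H x y z = H y x z) /\ (forall x y z, H x y z = H x z y) /\
  (forall (a : R) x y z w, H (a *: x + y) z w = a *: H x z w + H y z w).

Definition PsiP (N : nat) (M K : 'M[R]_N) (G : 'cV[R]_N -> 'cV[R]_N -> 'cV[R]_N)
    (w : R) (phi : 'cV[R]_N) : 'cV[R]_N :=
  invmx (4 * w ^+ 2 *: M - K) *m G phi phi.

Definition PsiN (N : nat) (K : 'M[R]_N) (G : 'cV[R]_N -> 'cV[R]_N -> 'cV[R]_N)
    (phi : 'cV[R]_N) : 'cV[R]_N :=
  - (invmx K *m G phi phi).

(* Indices alpha, beta are encoded by bool: true = alpha (= m), false = beta (= m+N). *)
Definition Psi2 (N : nat) (M K : 'M[R]_N) G (w : R) (phi : 'cV[R]_N)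
    (k l : bool) : 'cV[R]_N :=
  if k == l then PsiP M K G w phi else PsiN K G phi.

Definition Xi (N : nat) (M K : 'M[R]_N) G H (w : R) (phi : 'cV[R]_N)
    (k l p : bool) : 'cV[R]_N :=
  G (Psi2 M K G w phi k l) phi + G phi (Psi2 M K G w phi l p) + H phi phi phi.

Definition f_alpha (N : nat) (M K : 'M[R]_N) G H (w : R) (phi : 'cV[R]_N)
    (k l p : bool) : C :=
  Copp (Cdiv (RtoC (vdot phi (Xi M K G H w phi k l p)))
             (Cmult (RtoC 2%:R) (Cmult Ci (RtoC w)))).

Definition f_beta (N : nat) (M K : 'M[R]_N) G H (w : R) (phi : 'cV[R]_N)
    (k l p : bool) : C :=
  Copp (f_alpha M K G H w phi k l p).

Definition sumb (F : bool -> C) : C := Cplus (F true) (F false).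

Definition cubic_sum (c : bool -> bool -> bool -> C) (z : bool -> C) : C :=
  sumb (fun k => sumb (fun l => sumb (fun p =>
    Cmult (c k l p) (Cmult (z k) (Cmult (z l) (z p)))))).

From Stdlib Require Import Reals Lra.
From Coquelicot Require Import Coquelicot.
From mathcomp Require Import all_boot all_algebra.
From mathcomp Require Import Rstruct.
Import GRing.Theory Num.Theory.

Local Open Scope R_scope.

(* Besides w = omega_m > 0, it only uses
   that G is symmetric and linear in its first argument: the hypotheses on
   M, K, H, the other modes and non-resonance make Psi^(P), Psi^(N)
   meaningful, but the identities hold for whatever vectors they denote.

   With P := phi^T G(Psi^P, phi) and
      Q := phi^T G(Psi^N, phi), symmetry of G gives
      phi^T Xi_klp = c_kl + c_lp + h, where c_kl = P if k = l and Q
      otherwise ([pair_coeff]).  Linearity of G in its first argument gives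
      A = P + Q and B w^2 = Q - P.
   2. Coefficients of the dynamics.  Since -1/(2 i w) = i/(2 w), the
      coefficient f_alpha_klp is i/(2w) times the real number above.
   3. Cubic sums.  For coefficients of the form c_kl + c_lp + h one has
      sum_klp (...) z_k z_l z_p = (h + P + Q) r^3 + (P - Q) r d^2 with
      d = z_a - z_b, while s = i w d.
   4. Differentiating r and s = i w (z_a - z_b) along the dynamics and
      substituting steps 1-3 yields r' = s and the announced formula for s'. *)

Lemma is_derive_Cmult_l {f : R -> C} {t : R} (c : C) {l : C} :
  is_derive f t l -> is_derive (fun x => Cmult c (f x)) t (Cmult c l).
Proof.
move=> hf.
have hlin : is_linear (fun x : C_R_NormedModule => Cmult c x).
{ split.
  - move=> x y. change ((c * (x + y))%C = (c * x + c * y)%C). ring.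
  - move=> k x. rewrite !scal_R_Cmult.
    change ((c * (k * x))%C = (k * (c * x))%C). ring.
  - exists (Cmod c + 1); split.
    + have := Cmod_ge_0 c; lra.
    + move=> x. rewrite -!Cmod_norm Cmod_mult.
      have := Cmod_ge_0 x; have := Cmod_ge_0 c; nra. }
apply: (filterdiff_ext_lin _ (fun y : R_AbsRing => Cmult c (scal y l))).
- apply: (filterdiff_comp' f (fun x : C_R_NormedModule => Cmult c x)).
  + exact: hf.
  + exact: filterdiff_linear.
- move=> y. rewrite /= !scal_R_Cmult.
  change ((c * (y * l))%C = (y * (c * l))%C). ring.
Qed.

Lemma is_derive_Cplus {f g : R -> C} {t : R} {df dg : C} :
  is_derive f t df -> is_derive g t dg ->
  is_derive (fun x => Cplus (f x) (g x)) t (Cplus df dg).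
Proof. exact: is_derive_plus. Qed.

Lemma is_derive_Cminus {f g : R -> C} {t : R} {df dg : C} :
  is_derive f t df -> is_derive g t dg ->
  is_derive (fun x => Cminus (f x) (g x)) t (Cminus df dg).
Proof. exact: is_derive_minus. Qed.

Definition pair_coeff (P Q h : R) (k l p : bool) : R :=
  (if k == l then P else Q) + (if l == p then P else Q) + h.

Section RealCoefficients.
Local Open Scope ring_scope.

Lemma vdotD (N : nat) (x u v : 'cV[R]_N) : vdot x (u + v) = vdot x u + vdot x v.
Proof. by rewrite /vdot mulmxDr mxE. Qed.

Lemma vdotB (N : nat) (x u v : 'cV[R]_N) : vdot x (u - v) = vdot x u - vdot x v.
Proof. by rewrite /vdot mulmxBr !mxE. Qed.

Lemma vdotZ (N : nat) (x u : 'cV[R]_N) (a : R) : vdot x (a *: u) = a * vdot x u.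
Proof. by rewrite /vdot -scalemxAr mxE. Qed.

Context {N : nat} {G : 'cV[R]_N -> 'cV[R]_N -> 'cV[R]_N}.
Hypothesis hG : sym_bilinear G.

Lemma bilin0l (u : 'cV[R]_N) : G 0 u = 0.
Proof.
have := hG.2 1 0 0 u; rewrite !scale1r addr0 => e.
by apply: (addrI (G 0 u)); rewrite addr0 -e.
Qed.

Lemma bilinDl (x y u : 'cV[R]_N) : G (x + y) u = G x u + G y u.
Proof. by have := hG.2 1 x y u; rewrite !scale1r. Qed.

Lemma bilinZl (a : R) (x u : 'cV[R]_N) : G (a *: x) u = a *: G x u.
Proof. by rewrite -[a *: x]addr0 hG.2 bilin0l addr0. Qed.

Lemma bilinBl (x y u : 'cV[R]_N) : G (x - y) u = G x u - G y u.
Proof. by rewrite bilinDl -scaleN1r bilinZl scaleN1r. Qed.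

Variables (M K : 'M[R]_N) (H : 'cV[R]_N -> 'cV[R]_N -> 'cV[R]_N -> 'cV[R]_N).
Variables (w : R) (phi : 'cV[R]_N).

Let P := vdot phi (G (PsiP M K G w phi) phi).
Let Q := vdot phi (G (PsiN K G phi) phi).
Let h := vdot phi (H phi phi phi).

Lemma vdot_Xi (k l p : bool) :
  vdot phi (Xi M K G H w phi k l p) = pair_coeff P Q h k l p.
Proof. by rewrite /Xi !vdotD (hG.1 phi); case: k; case: l; case: p. Qed.

Lemma A_weights :
  2 * vdot phi (G (2^-1 *: (PsiN K G phi + PsiP M K G w phi)) phi) = P + Q.
Proof.
by rewrite bilinZl vdotZ bilinDl vdotD mulrA divff ?pnatr_eq0 // mul1r addrC.
Qed.

Lemma B_weights : w != 0 ->
  2 * vdot phi (G ((2 * w ^+ 2)^-1 *: (PsiN K G phi - PsiP M K G w phi)) phi)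
    * w ^+ 2 = Q - P.
Proof.
move=> hw; have h2w : 2 * w ^+ 2 != 0 by rewrite mulf_neq0 ?pnatr_eq0 ?expf_neq0.
by rewrite bilinZl vdotZ bilinBl vdotB mulrAC mulVKf.
Qed.
End RealCoefficients.

Lemma natr_two : (2%:R)%R = 2.
Proof. rewrite mulr2n; change (1 + 1 = 2); lra. Qed.

Section ReducedDynamics.
Local Open Scope C_scope.

Lemma Ci_sqr : Ci * Ci = - 1.
Proof. apply: injective_projections; rewrite /=; ring. Qed.

Lemma RtoC_neq0 (x : R) : x <> 0%R -> RtoC x <> 0.
Proof. by move=> hx e; apply: hx; case: e. Qed.

Lemma neg_div_2iw (X w : R) : w <> 0%R ->
  - (X / (RtoC (2%:R)%R * (Ci * w))) = Ci / (2 * w) * X.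
Proof.
move=> hw; rewrite natr_two; field [Ci_sqr].
by split; [exact: RtoC_neq0 | exact: Ci_nz].
Qed.

Lemma f_alpha_pair_coeff {N : nat} (M K : 'M[R]_N)
    {G : 'cV[R]_N -> 'cV[R]_N -> 'cV[R]_N}
    (H : 'cV[R]_N -> 'cV[R]_N -> 'cV[R]_N -> 'cV[R]_N) {w : R} (phi : 'cV[R]_N) :
  sym_bilinear G -> w <> 0%R -> forall k l p : bool,
  f_alpha M K G H w phi k l p =
  Ci / (2 * w) * pair_coeff (vdot phi (G (PsiP M K G w phi) phi))
                            (vdot phi (G (PsiN K G phi) phi))
                            (vdot phi (H phi phi phi)) k l p.
Proof. by move=> hG hw k l p; rewrite /f_alpha (vdot_Xi hG) neg_div_2iw. Qed.

Lemma cubic_sum_ext (c d : bool -> bool -> bool -> C) (z : bool -> C) :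
  (forall k l p, c k l p = d k l p) -> cubic_sum c z = cubic_sum d z.
Proof. by move=> hcd; rewrite /cubic_sum /sumb !hcd. Qed.

Lemma cubic_sum_opp (c : bool -> bool -> bool -> C) (z : bool -> C) :
  cubic_sum (fun k l p => - c k l p) z = - cubic_sum c z.
Proof. rewrite /cubic_sum /sumb; ring. Qed.

Lemma cubic_sum_scale (a : C) (c : bool -> bool -> bool -> C) (z : bool -> C) :
  cubic_sum (fun k l p => a * c k l p) z = a * cubic_sum c z.
Proof. rewrite /cubic_sum /sumb; ring. Qed.

Lemma cubic_sum_pair_coeff (P Q h : R) (z : bool -> C) :
  cubic_sum (fun k l p => RtoC (pair_coeff P Q h k l p)) z =
  (h + (P + Q)) * ((z true + z false) * ((z true + z false) * (z true + z false)))
  + (P - Q) * ((z true + z false) * ((z true - z false) * (z true - z false))).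
Proof. rewrite /cubic_sum /sumb /pair_coeff /= !RtoC_plus; ring. Qed.

(* Step 4, first equation: the nonlinear terms of z_a' and z_b' cancel in
   r' = z_a' + z_b', since f_beta = - f_alpha. *)
Lemma reduced_velocity (w : R) (f : bool -> bool -> bool -> C) (z : bool -> C) :
  (Ci * w * z true + cubic_sum f z)
    + (- (Ci * w) * z false + cubic_sum (fun k l p => - f k l p) z)
  = Ci * w * (z true - z false).
Proof. rewrite cubic_sum_opp; ring. Qed.

(* Step 4, second equation: s' = i w (z_a' - z_b') is the Duffing-type force,
   once A = P + Q and B w^2 = Q - P.  Here s^2 = - w^2 d^2 converts the
   d^2-term of [cubic_sum_pair_coeff] into the B-term. *)
Lemma reduced_acceleration {w P Q h A B : R} {f : bool -> bool -> bool -> C}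
    {z : bool -> C} :
  w <> 0%R -> A = (P + Q)%R -> (B * w ^+ 2 = Q - P)%R ->
  (forall k l p, f k l p = Ci / (2 * w) * pair_coeff P Q h k l p) ->
  let r := z true + z false in
  let s := Ci * w * (z true - z false) in
  Ci * w * ((Ci * w * z true + cubic_sum f z)
             - (- (Ci * w) * z false + cubic_sum (fun k l p => - f k l p) z))
  = - (RtoC (w ^+ 2)%R * r) - RtoC (h + A)%R * (r * (r * r))
    - B * (r * (s * s)).
Proof.
move=> hw hA hB hf r s.
(* hB, read with Stdlib's real operations, then embedded in C. *)
have hBC : B * (w * w) = Q - P.
  have hBR : Rmult B (Rmult w w) = Rminus Q P by exact: hB.
  by rewrite -!RtoC_mult -RtoC_minus hBR.
rewrite cubic_sum_opp (cubic_sum_ext _ _ _ hf) cubic_sum_scale cubic_sum_pair_coeff.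
rewrite expr2 hA !RtoC_plus RtoC_mult /s /r.
field [Ci_sqr hBC].
exact: RtoC_neq0.
Qed.
End ReducedDynamics.

Local Open Scope ring_scope.

Theorem mainTheorem6 (N : nat) (M K : 'M[R]_N)
  (G : 'cV[R]_N -> 'cV[R]_N -> 'cV[R]_N)
  (H : 'cV[R]_N -> 'cV[R]_N -> 'cV[R]_N -> 'cV[R]_N)
  (phi : 'I_N -> 'cV[R]_N) (omega : 'I_N -> R)
  (hM : spd M) (hK : spd K) (hG : sym_bilinear G) (hH : sym_trilinear H)
  (homega : forall s, 0 < omega s)
  (heig : forall s, K *m phi s = omega s ^+ 2 *: (M *m phi s))
  (hnorm : forall s t, vdot (phi s) (M *m phi t) = (s == t)%:R)
  (m : 'I_N)
  (hnonres : forall r : 'I_N, 4 * omega m ^+ 2 != omega r ^+ 2)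
  (z : bool -> R -> C) (z' : bool -> R -> C)
  (hza : forall t, is_derive (z true) t (z' true t))
  (hzb : forall t, is_derive (z false) t (z' false t))
  (hdyn_a : forall t, z' true t =
     Cplus (Cmult (Cmult Ci (RtoC (omega m))) (z true t))
           (cubic_sum (f_alpha M K G H (omega m) (phi m)) (fun k => z k t)))
  (hdyn_b : forall t, z' false t =
     Cplus (Cmult (Copp (Cmult Ci (RtoC (omega m)))) (z false t))
           (cubic_sum (f_beta M K G H (omega m) (phi m)) (fun k => z k t))) :
  let w := omega m in
  let ph := phi m in
  let h := vdot ph (H ph ph ph) in
  let ahat := 2^-1 *: (PsiN K G ph + PsiP M K G w ph) in
  let bhat := (2 * w ^+ 2)^-1 *: (PsiN K G ph - PsiP M K G w ph) in
  let A := 2 * vdot ph (G ahat ph) in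
  let B := 2 * vdot ph (G bhat ph) in
  let r := fun t => Cplus (z true t) (z false t) in
  let s := fun t => Cmult (Cmult Ci (RtoC w)) (Cminus (z true t) (z false t)) in
  forall t,
    is_derive r t (s t) /\
    is_derive s t
      (Cminus (Cminus (Copp (Cmult (RtoC (w ^+ 2)) (r t)))
                      (Cmult (RtoC (h + A)) (Cmult (r t) (Cmult (r t) (r t)))))
              (Cmult (RtoC B) (Cmult (r t) (Cmult (s t) (s t))))).
Proof.
move=> w ph h ahat bhat A B r s t.
pose P := vdot ph (G (PsiP M K G w ph) ph).
pose Q := vdot ph (G (PsiN K G ph) ph).
have hw : w != 0 := lt0r_neq0 (homega m).
have hwR : w <> 0%R by apply/eqP.
have hA : A = P + Q := A_weights hG M K w ph.
have hB : B * w ^+ 2 = Q - P := B_weights hG M K w ph hw.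
have hf := f_alpha_pair_coeff M K H ph hG hwR.
split.
- have := is_derive_Cplus (hza t) (hzb t).
  by rewrite hdyn_a hdyn_b reduced_velocity.
- have := is_derive_Cmult_l (Cmult Ci w) (is_derive_Cminus (hza t) (hzb t)).
  by rewrite hdyn_a hdyn_b (reduced_acceleration hwR hA hB hf).
Qed.
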